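(* Let $S$ be a regular semigroup with zero $0$, and let $e,f$ be idempotents of $S$. Then $ef=0$ if and only if $M(e,f)=\{0\}$.
   Context: A semigroup is regular if for every $x$ there is $y$ with $xyx=x$. For idempotents $e,f$ of $S$, $M(e,f)=\{g \text{ idempotent in } S: ge=g \text{ and } fg=g\}$. *)

Definition associative {S : Type} (mul : S -> S -> S) : Prop :=
  forall x y z, mul x (mul y z) = mul (mul x y) z.

Definition is_zero {S : Type} (mul : S -> S -> S) (z : S) : Prop :=
  forall x, mul z x = z /\ mul x z = z.

Definition regular {S : Type} (mul : S -> S -> S) : Prop :=
  forall x, exists y, mul (mul x y) x = x.

Definition idempotent {S : Type} (mul : S -> S -> S) (e : S) : Prop :=
  mul e e = e.

Definition Mset {S : Type} (mul : S -> S -> S) (e f : S) (g : S) : Prop :=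
  idempotent mul g /\ mul g e = g /\ mul f g = g.


(* If ef = 0, every g in M(e,f) satisfies g = g(ef)g = 0.  Conversely, if z is
   an inverse of ef (which exists by regularity), then g := fze lies in M(e,f),
   and ef = (ef)z(ef) = e g f; so M(e,f) = {0} forces ef = 0. *)

Section Semigroup.

Context {S : Type} {mul : S -> S -> S}.
Hypothesis mulA : associative mul.

Local Infix "*" := mul.

Lemma inverse_of_regular {x y : S} :
  x * y * x = x -> exists z, x * z * x = x /\ z * x * z = z.
Proof.
  intros Hxy. exists (y * x * y). split.
  - transitivity (x * y * (x * y * x)); [repeat rewrite <- mulA; reflexivity|].
    rewrite Hxy. exact Hxy.
  - transitivity (y * (x * y * x) * (y * x * y)); [repeat rewrite <- mulA; reflexivity|].
    rewrite Hxy.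
    transitivity (y * (x * y * x) * y); [repeat rewrite <- mulA; reflexivity|].
    rewrite Hxy. reflexivity.
Qed.

Lemma Mset_sandwich {e f g : S} : Mset mul e f g -> g = g * (e * f) * g.
Proof.
  intros [Hgg [Hge Hfg]].
  transitivity (g * e * (f * g)); [rewrite Hge, Hfg; symmetry; exact Hgg|].
  repeat rewrite <- mulA. reflexivity.
Qed.

Lemma Mset_of_inverse {e f z : S} :
  idempotent mul e -> idempotent mul f -> z * (e * f) * z = z ->
  Mset mul e f (f * z * e).
Proof.
  unfold idempotent. intros He Hf Hz. split; [|split].
  - transitivity (f * (z * (e * f) * z) * e); [repeat rewrite <- mulA; reflexivity|].
    rewrite Hz. reflexivity.
  - rewrite <- mulA, He. reflexivity.
  - rewrite !mulA, Hf. reflexivity.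
Qed.

Context {zero : S}.
Hypothesis zeroP : is_zero mul zero.

Lemma mul0l (x : S) : zero * x = zero.
Proof. apply zeroP. Qed.

Lemma mul0r (x : S) : x * zero = zero.
Proof. apply zeroP. Qed.

Lemma Mset_zero (e f : S) : Mset mul e f zero.
Proof. split; [|split]; [apply mul0l | apply mul0l | apply mul0r]. Qed.

End Semigroup.

Theorem lemma2p2 (S : Type) (mul : S -> S -> S) (zero : S)
  (Hassoc : associative mul) (Hzero : is_zero mul zero) (Hreg : regular mul)
  (e f : S) (He : idempotent mul e) (Hf : idempotent mul f) :
  mul e f = zero <-> (forall g, Mset mul e f g <-> g = zero).
Proof.
  split.
  - intros Hef g. split.
    + intros Hg. rewrite (Mset_sandwich Hassoc Hg), Hef, (mul0r Hzero), (mul0l Hzero).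
      reflexivity.
    + intros ->. apply (Mset_zero Hzero).
  - intros HM.
    destruct (Hreg (mul e f)) as [y Hy].
    destruct (inverse_of_regular Hassoc Hy) as [z [Hz Hzz]].
    assert (Hg : mul (mul f z) e = zero).
    { apply HM. exact (Mset_of_inverse Hassoc He Hf Hzz). }
    rewrite <- Hz.
    transitivity (mul e (mul (mul (mul f z) e) f)); [repeat rewrite <- Hassoc; reflexivity|].
    rewrite Hg, (mul0l Hzero), (mul0r Hzero). reflexivity.
Qed.
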